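(* Let $G=(V,E)$ be a graph, let $r\ge1$ be an integer, and let $k=\mathrm{adm}_r(G)$. If $\sigma$ is a total order on $V$ such that $\mathrm{est}_r(u,G_\sigma)\le k$ for all $u\in V$, then for every $u\in V$, \[ \sum_{v\in \mathrm{reach}_r(u,G_\sigma)} (k-1)^{r-d_v} \le k\cdot (k-1)^{r-1}, \] where $d_v=d_v(u,G_\sigma)$.
   Context: For a graph $G$ and a total order $\sigma$ of $V$, a $u$–$v$ path $P$ with $v\ne u$ is $\ell$-qualifying if it has length at most $\ell$, $u<_\sigma v$, and every vertex of $P$ other than $u,v$ precedes $u$ in $\sigma$. $\mathrm{reach}_r(u,G_\sigma)$ is the set of vertices $v$ for which an $r$-qualifying $u$–$v$ path exists, and $d_v(u,G_\sigma)$ is the minimum $i$ such that $v\in\mathrm{reach}_i(u,G_\sigma)$. An $\ell$-qualifying $u$–$v$ path is shortest if no $(\ell-1)$-qualifying $u$–$v$ path exists. The $r$-backconnectivity $\mathrm{bcon}_r(u,G_\sigma)$ is the maximum number of $r$-qualifying paths starting at $u$ that are pairwise vertex-disjoint apart from $u$; the estimated $r$-backconnectivity $\mathrm{est}_r(u,G_\sigma)$ is the maximum number of shortest $r$-qualifying paths starting at $u$ that are pairwise vertex-disjoint apart from $u$. The $r$-admissibility is $\mathrm{adm}_r(G)=\min_\sigma\max_{u}\mathrm{bcon}_r(u,G_\sigma)$ over all total orders $\sigma$ of $V$. *)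

(* Graph = symmetric irreflexive relation e on a finType T.
   A total order sigma on V is given by an injective rank function
   rk : T -> nat (x <_sigma y  iff  rk x < rk y). *)
From Stdlib Require Import ClassicalEpsilon.
From mathcomp Require Import all_boot.
Set Implicit Arguments. Unset Strict Implicit. Unset Printing Implicit Defensive.

Definition asbool (P : Prop) : bool :=
  if excluded_middle_informative P then true else false.

Section Adm.
Variable T : finType.
Variable e : rel T.
Variable rk : T -> nat.

(* p = [x1; ...; xl] encodes the path u = x0, x1, ..., xl = v of length l
   = size p.  It is l-qualifying: length <= l, simple, edges of e,
   v <> u, u <_sigma v, and every interior vertex x1..x_{l-1} precedes u. *)
Definition qual (l : nat) (u v : T) (p : seq T) : bool :=
  [&& path e u p, last u p == v, uniq (u :: p), size p <= l,
      v != u, rk u < rk v &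
      all (fun x => rk x < rk u) (behead (belast u p))].

Definition squal (l : nat) (u v : T) (p : seq T) : Prop :=
  qual l u v p /\ ~ (exists q, qual (size p).-1 u v q).

Definition reach (l : nat) (u : T) : {set T} :=
  [set v | asbool (exists p, qual l u v p)].

(* d_v(u) = min i with v \in reach_i(u); qualifying paths are simple so
   i ranges over 0..#|T| without loss (value #|T| if v is unreachable). *)
Definition dv (u v : T) : nat :=
  \big[minn/#|T|]_(i < #|T|.+1 | v \in reach i u) i.

(* pairwise vertex-disjoint apart from u (p lists the vertices other than u) *)
Definition disj_family (ps : seq (seq T)) : bool :=
  pairwise (fun p q : seq T => ~~ has (fun x => x \in q) p) ps.

Definition has_family (Q : T -> seq T -> Prop) (u : T) (m : nat) : Prop :=
  exists ps : seq (seq T), size ps = m /\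
    (forall p, p \in ps -> Q (last u p) p) /\ disj_family ps.

(* maximum (the number is at most #|T|, since the paths are nonempty
   and disjoint) *)
Definition bcon (r : nat) (u : T) : nat :=
  \max_(m < #|T|.+1 | asbool (has_family (fun v p => qual r u v p) u m)) m.

Definition est (r : nat) (u : T) : nat :=
  \max_(m < #|T|.+1 | asbool (has_family (fun v p => squal r u v p) u m)) m.
End Adm.

(* adm_r(G) = min over all total orders sigma of V of max_u bcon_r(u, G_sigma);
   total orders on V correspond exactly to bijections (rank functions)
   V -> {0..|V|-1}. *)
Definition adm (T : finType) (e : rel T) (r : nat) : nat :=
  \big[minn/#|T|]_(s : {ffun T -> 'I_#|T|} | injectiveb s)
     \max_(u : T) bcon e (fun x => nat_of_ord (s x)) r u.

(* Let [layer v] be the length of a shortest walk from [u] to [v] whose interior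
   lies below [u]; for [v] above [u] this is [d_v].  The arcs of the breadth-first
   search along such walks form a layered digraph.  For [c] not above [u],
   disjoint paths in it from the successors of [c] to vertices above [c] give
   disjoint shortest qualifying paths from [c], plus one going back towards [u]
   when [c] lies below [u].  Hence, by Menger's theorem, the vertices above [u]
   reachable from [c] are separated by at most [k - 1] (at most [k] for [c = u])
   vertices of higher layers, and induction on [r - layer c] bounds the weight
   of these vertices by [(k - 1) ^ (r - layer c)], resp. [k * (k - 1) ^ (r - 1)]. *)

From Stdlib Require Import Classical ClassicalEpsilon.
From mathcomp Require Import all_boot zify.
Set Implicit Arguments. Unset Strict Implicit. Unset Printing Implicit Defensive.

(** * Menger's theorem *)

Section PathSurgery.
Variables (T : eqType) (R : rel T).

Lemma path_prefix_hit (P : pred T) a q : path R a q -> has P (a :: q) ->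
  exists q', [/\ path R a q', P (last a q'), {subset q' <= q} &
                 ~~ has P (belast a q')].
Proof.
elim: q a => [|b q IH] a /=; first by rewrite orbF => _ Pa; exists [::].
move=> /andP[Rab pq] /orP[Pa|hq]; first by exists [::]; split.
case: (boolP (P a)) => Pa; first by exists [::]; split.
have [q' [pq' Pq' sq' hq']] := IH b pq hq.
exists (b :: q'); split; rewrite /= ?Rab ?negb_or ?Pa //.
by move=> z; rewrite inE => /predU1P[->|/sq' zq]; rewrite inE ?eqxx ?zq ?orbT.
Qed.

Lemma path_suffix_hit (P : pred T) a q : path R a q -> has P (a :: q) ->
  exists a' q', [/\ P a', path R a' q', last a' q' = last a q,
                    {subset a' :: q' <= a :: q} & ~~ has P q'].
Proof.
elim: q a => [|b q IH] a /=; first by rewrite orbF => _ Pa; exists a, [::]; split.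
move=> /andP[Rab pq] hP; case: (boolP (P b || has P q)) => hq.
  have [a' [q' [Pa' pq' lq' sq' hq']]] := IH b pq hq.
  by exists a', q'; split => // z /sq' zq; rewrite inE zq orbT.
by move: hP; rewrite (negbTE hq) orbF => Pa; exists a, (b :: q); split; rewrite /= ?Rab.
Qed.

End PathSurgery.

Section Menger.
Variable T : finType.
Implicit Types (D : {set T * T}) (A B S X Y : {set T}) (p : seq T).

Definition edge D : rel T := fun a b => (a, b) \in D.

Definition walk D A B p :=
  if p is a :: q then [&& a \in A, path (edge D) a q & last a q \in B] else false.

Definition separates D A B X := forall p, walk D A B p -> has [in X] p.

Definition linked D A B n := exists (I : {set T}) (f : T -> seq T),
  [/\ n <= #|I|, {in I, forall i, walk D A B (f i)} &
      {in I &, forall i j, i != j -> [disjoint f i & f j]}].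

Definition enters_last X p :=
  if p is a :: q then ~~ has [in X] (belast a q) else true.
Definition leaves_first X p := ~~ has [in X] (behead p).

Lemma walk_subset D D' A B p : D' \subset D -> walk D' A B p -> walk D A B p.
Proof.
case: p => //= a q /subsetP sD /and3P[-> pq ->]; rewrite andbT.
by apply: sub_path pq => z w; apply: sD.
Qed.

Lemma path_setD1_edge_l D x y a q :
  path (edge D) a q -> x \notin belast a q -> path (edge (D :\ (x, y))) a q.
Proof.
elim: q a => //= b q IH a /andP[Dab pq]; rewrite inE negb_or => /andP[xa xq].
by rewrite IH // andbT /edge in_setD1 (Dab : (a, b) \in D) xpair_eqE eq_sym (negbTE xa).
Qed.

Lemma path_setD1_edge_r D x y a q :
  path (edge D) a q -> y \notin q -> path (edge (D :\ (x, y))) a q.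
Proof.
elim: q a => //= b q IH a /andP[Dab pq]; rewrite inE negb_or => /andP[yb yq].
rewrite IH // andbT /edge in_setD1 (Dab : (a, b) \in D) xpair_eqE.
by rewrite [b == y]eq_sym (negbTE yb) andbF.
Qed.

Lemma walk_prefix_hit D A B X p : walk D A B p -> has [in X] p ->
  exists2 p', walk D A X p' & enters_last X p' /\ {subset p' <= p}.
Proof.
case: p => //= a q /and3P[aA pq _] hX.
have [q' [pq' Xq' sq' hq']] := path_prefix_hit pq hX.
exists (a :: q'); first by rewrite /= aA pq'; apply: Xq'.
by split => // z; rewrite !inE => /predU1P[->|/sq' ->]; rewrite ?eqxx ?orbT.
Qed.

Lemma walk_suffix_hit D A B Y p : walk D A B p -> has [in Y] p ->
  exists2 p', walk D Y B p' & leaves_first Y p' /\ {subset p' <= p}.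
Proof.
case: p => //= a q /and3P[_ pq lB] hY.
have [a' [q' [Ya' pq' lq' sq' hq']]] := path_suffix_hit pq hY.
by exists (a' :: q'); first by rewrite /= pq' lq' lB !andbT; exact: Ya'.
Qed.

Lemma enters_last_hit X p c : enters_last X p -> c \in p -> c \in X ->
  c = last c p.
Proof.
case: p => //= a q /hasPn nX; rewrite lastI mem_rcons inE => /predU1P[//|cq].
by move/nX: cq => /negP.
Qed.

Lemma leaves_first_hit X p c : leaves_first X p -> c \in p -> c \in X ->
  c = head c p.
Proof.
case: p => //= a q /hasPn nX; rewrite inE => /predU1P[//|cq].
by move/nX: cq => /negP.
Qed.

Lemma walk_glue D A B z p q :
  walk D A [set z] p -> walk D [set z] B q -> walk D A B (p ++ behead q).
Proof.
case: p => // a p /and3P[aA pp /set1P lp]; case: q => // b q /and3P[/set1P-> pq lq].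
by rewrite /= aA cat_path pp lp pq last_cat lp.
Qed.

Lemma walk_glue_edge D A B x y p q : edge D x y ->
  walk D A [set x] p -> walk D [set y] B q -> walk D A B (p ++ q).
Proof.
move=> Dxy; case: p => // a p /and3P[aA pp /set1P lp].
case: q => // b q /and3P[/set1P-> pq lq].
by rewrite /= aA cat_path pp lp /= Dxy pq last_cat lp.
Qed.

Lemma separates_setD1_edge_l D A B S x y :
  separates (D :\ (x, y)) A B S -> separates D A B (x |: S).
Proof.
move=> sepS [|a q] // hw; case: (boolP (x \in belast a q)) => hx.
  by apply/hasP; exists x; [exact: mem_belast hx | rewrite setU11].
move/and3P: hw => [aA pq lB].
have /hasP[z zp zS] : has [in S] (a :: q) by apply: sepS; rewrite /= aA lB path_setD1_edge_l.
by apply/hasP; exists z; rewrite // in_setU1 zS orbT.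
Qed.

Lemma separates_setD1_edge_r D A B S x y :
  separates (D :\ (x, y)) A B S -> separates D A B (y |: S).
Proof.
move=> sepS [|a q] // hw; case: (boolP (y \in q)) => hy.
  by apply/hasP; exists y; [rewrite inE hy orbT | rewrite setU11].
move/and3P: hw => [aA pq lB].
have /hasP[z zp zS] : has [in S] (a :: q) by apply: sepS; rewrite /= aA lB path_setD1_edge_r.
by apply/hasP; exists z; rewrite // in_setU1 zS orbT.
Qed.

Lemma separates_prefix D A B X S x y : x \in X -> separates D A B X ->
  separates (D :\ (x, y)) A X S -> separates D A B S.
Proof.
move=> xX sepX sepS p hw; have [p' hw' [ep' sp']] := walk_prefix_hit hw (sepX p hw).
have /hasP[z /sp' zp zS] : has [in S] p'; last by apply/hasP; exists z.
apply: sepS; case: p' hw' ep' {sp'} => //= a q /and3P[aA pq lX] nX.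
by rewrite aA lX path_setD1_edge_l //; apply: contra nX => hx; apply/hasP; exists x.
Qed.

Lemma separates_suffix D A B Y S x y : y \in Y -> separates D A B Y ->
  separates (D :\ (x, y)) Y B S -> separates D A B S.
Proof.
move=> yY sepY sepS p hw; have [p' hw' [lp' sp']] := walk_suffix_hit hw (sepY p hw).
have /hasP[z /sp' zp zS] : has [in S] p'; last by apply/hasP; exists z.
apply: sepS; case: p' hw' lp' {sp'} => //= a q /and3P[aY pq lB] nY.
by rewrite aY lB path_setD1_edge_r //; apply: contra nY => hy; apply/hasP; exists y.
Qed.

Lemma disjoint_family_reindex (I Z : {set T}) (f : T -> seq T) (h : seq T -> T)
    (Q : seq T -> Prop) :
  {in I, forall i, Q (f i) /\ h (f i) \in Z} ->
  {in I &, forall i j, i != j -> [disjoint f i & f j]} ->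
  (forall p, Q p -> h p \in p) -> #|Z| <= #|I| ->
  exists g : T -> seq T, {in Z, forall z, Q (g z) /\ h (g z) = z} /\
     {in Z &, forall z z', z != z' -> [disjoint g z & g z']}.
Proof.
move=> hI dI hp cZ.
have inj_hf : {in I &, injective (h \o f)}.
  move=> i j iI jI /= hij; apply/eqP/negP => /negP ij.
  have := disjointFr (dI i j iI jI ij) (hp _ (hI i iI).1).
  by rewrite hij (hp _ (hI j jI).1).
have imZ : (h \o f) @: I = Z.
  apply/eqP; rewrite eqEcard card_in_imset // cZ andbT.
  by apply/subsetP => _ /imsetP[i iI ->]; exact: (hI i iI).2.
pose g z := f (odflt z [pick i in I | h (f i) == z]).
have gP z : z \in Z -> exists2 i, i \in I & g z = f i /\ h (f i) = z.
  rewrite -imZ => /imsetP[i0 i0I ->]; rewrite /g.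
  case: pickP => [i /andP[iI /eqP hi]|/(_ i0)]; last by rewrite i0I eqxx.
  by exists i.
exists g; split; first by move=> z /gP[i iI [-> <-]]; split => //; exact: (hI i iI).1.
move=> z z' /gP[i iI [-> <-]] /gP[j jI [-> <-]] hij; apply: dI => //.
by apply: contraNneq hij => ->.
Qed.

Lemma linked_last D A X n : #|X| <= n -> linked D A X n ->
  exists g : T -> seq T,
    {in X, forall z, walk D A [set z] (g z) /\ enters_last X (g z)} /\
    {in X &, forall z z', z != z' -> [disjoint g z & g z']}.
Proof.
move=> cX [I [f [nI fw fd]]].
case: (set_0Vmem X) => [->|[x0 _]]; first by exists (fun=> [::]); split => ? ; rewrite inE.
have [f' hf'] : exists f' : T -> seq T, forall i, i \in I ->
    [/\ walk D A X (f' i), enters_last X (f' i) & {subset f' i <= f i}].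
  apply: (@fin_all_exists T (fun=> seq T) (fun i p => i \in I ->
    [/\ walk D A X p, enters_last X p & {subset p <= f i}])) => i.
  case: (boolP (i \in I)) => iI; last by exists [::].
  have hw := fw i iI; have hX : has [in X] (f i).
    case: (f i) hw => // a q /and3P[_ _ lX].
    by apply/hasP; exists (last a q); rewrite ?mem_last.
  by have [p hp [ep sp]] := walk_prefix_hit hw hX; exists p.
have [] := @disjoint_family_reindex I X f' (last x0)
  (fun p => walk D A X p /\ enters_last X p).
- by move=> i iI; have [w e _] := hf' i iI; split=> //; case: (f' i) w => //= a q /and3P[].
- move=> i j iI jI ij; have [_ _ si] := hf' i iI; have [_ _ sj] := hf' j jI.
  by apply: disjointW (fd i j iI jI ij); apply/subsetP.
- by move=> [[]|a q] // _ /=; exact: mem_last.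
- exact: leq_trans nI.
move=> g [hg dg]; exists g; split => // z zX; have [[w e] lz] := hg z zX.
by split=> //; case: (g z) w lz => //= a q /and3P[-> -> _] <-; rewrite set11.
Qed.

Lemma linked_first D Y B n : #|Y| <= n -> linked D Y B n ->
  exists g : T -> seq T,
    {in Y, forall z, walk D [set z] B (g z) /\ leaves_first Y (g z)} /\
    {in Y &, forall z z', z != z' -> [disjoint g z & g z']}.
Proof.
move=> cY [I [f [nI fw fd]]].
case: (set_0Vmem Y) => [->|[x0 _]]; first by exists (fun=> [::]); split => ? ; rewrite inE.
have [f' hf'] : exists f' : T -> seq T, forall i, i \in I ->
    [/\ walk D Y B (f' i), leaves_first Y (f' i) & {subset f' i <= f i}].
  apply: (@fin_all_exists T (fun=> seq T) (fun i p => i \in I ->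
    [/\ walk D Y B p, leaves_first Y p & {subset p <= f i}])) => i.
  case: (boolP (i \in I)) => iI; last by exists [::].
  have hw := fw i iI; have hY : has [in Y] (f i).
    by case: (f i) hw => //= a q /and3P[aY _ _]; rewrite aY.
  by have [p hp [ep sp]] := walk_suffix_hit hw hY; exists p.
have [] := @disjoint_family_reindex I Y f' (head x0)
  (fun p => walk D Y B p /\ leaves_first Y p).
- by move=> i iI; have [w e _] := hf' i iI; split=> //; case: (f' i) w => //= a q /and3P[].
- move=> i j iI jI ij; have [_ _ si] := hf' i iI; have [_ _ sj] := hf' j jI.
  by apply: disjointW (fd i j iI jI ij); apply/subsetP.
- by move=> [[]|a q] // _; exact: mem_head.
- exact: leq_trans nI.
move=> g [hg dg]; exists g; split => // z zY; have [[w e] hz] := hg z zY.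
by split=> //; case: (g z) w hz => //= a q /and3P[_ -> ->] <-; rewrite set11.
Qed.

(* Two such walks can only meet in [S]: otherwise their concatenation at the
   meeting point is an [A]-[B] walk avoiding [S]. *)
Lemma walks_meet_in_separator D A B S X Y p q c :
  separates D A B S -> S \subset X -> S \subset Y ->
  walk D A X p -> enters_last X p -> walk D Y B q -> leaves_first Y q ->
  c \in p -> c \in q -> c \in S.
Proof.
case: p => // a p; case: q => // b q sepS /subsetP SX /subsetP SY.
move=> wp ep wq eq cp cq; move: wp ep wq eq.
case/splitPl: cp => p1 p2 lp1 /and3P[aA pp _] /hasPn nX.
case/splitPl: cq => q1 q2 lq1 /and3P[_ pq lB] /hasPn nY.
move: pp pq lB; rewrite !cat_path last_cat lp1 lq1 => /andP[pp1 _] /andP[_ pq2] lB.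
have /hasP[s] : has [in S] (a :: p1 ++ q2).
  by apply: sepS; rewrite /= aA cat_path pp1 lp1 pq2 last_cat lp1.
rewrite -cat_cons mem_cat lastI lp1 mem_rcons inE => /orP[/predU1P[->//|sp]|sq] sS.
  by move: (nX s); rewrite belast_cat mem_cat sp (SX s sS) => /(_ isT).
by move: (nY s); rewrite mem_cat sq orbT (SY s sS) => /(_ isT).
Qed.

Lemma walk_widen D A A' B B' p : A \subset A' -> B \subset B' ->
  walk D A B p -> walk D A' B' p.
Proof.
move=> /subsetP sA /subsetP sB; case: p => //= a q /and3P[aA -> lB].
by rewrite sA ?sB.
Qed.

Lemma walk_last1 D A z p c : walk D A [set z] p -> last c p = z.
Proof. by case: p => //= a q /and3P[_ _ /set1P]. Qed.

Lemma walk_head1 D B z p c : walk D [set z] B p -> head c p = z.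
Proof. by case: p => //= a q /and3P[/set1P]. Qed.

Section Glue.
Variables (D : {set T * T}) (A B S : {set T}) (x y : T) (P Q : T -> seq T).
Hypotheses (Dxy : (x, y) \in D) (yS : y \notin S)
  (sepS : separates (D :\ (x, y)) A B S)
  (hP : {in x |: S, forall z,
     walk (D :\ (x, y)) A [set z] (P z) /\ enters_last (x |: S) (P z)})
  (dP : {in x |: S &, forall z z', z != z' -> [disjoint P z & P z']})
  (hQ : {in y |: S, forall z,
     walk (D :\ (x, y)) [set z] B (Q z) /\ leaves_first (y |: S) (Q z)})
  (dQ : {in y |: S &, forall z z', z != z' -> [disjoint Q z & Q z']}).

Lemma glue_meet z z' c : z \in x |: S -> z' \in y |: S -> c \in P z -> c \in Q z' ->
  z = z' /\ z \in S.
Proof.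
move=> zX z'Y cP cQ; have [wP eP] := hP zX; have [wQ eQ] := hQ z'Y.
have cS : c \in S.
  apply: walks_meet_in_separator sepS _ _ _ eP _ eQ cP cQ; rewrite ?subsetUr //.
    by apply: walk_widen wP; rewrite ?sub1set.
  by apply: walk_widen wQ; rewrite ?sub1set.
have cX : c \in x |: S by rewrite in_setU1 cS orbT.
have cY : c \in y |: S by rewrite in_setU1 cS orbT.
rewrite -(walk_last1 c wP) -(walk_head1 c wQ).
by rewrite -(enters_last_hit eP cP cX) -(leaves_first_hit eQ cQ cY).
Qed.

Let star z := if z == x then y else z.

Lemma star_in z : z \in x |: S -> star z \in y |: S.
Proof. by rewrite /star !in_setU1; case: eqP => [_ _|_ /= zS]; rewrite ?eqxx ?zS ?orbT. Qed.

Lemma star_inj : {in x |: S &, injective star}.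
Proof.
move=> z z' zX z'X; rewrite /star; case: eqP => [->|zx]; case: eqP => [->|z'x] //.
  by move=> yz'; move: z'X; rewrite -yz' in_setU1 (negbTE yS) orbF => /eqP <-.
by move=> zy; move: zX; rewrite zy in_setU1 (negbTE yS) orbF => /eqP ->.
Qed.

Lemma star_id_S z1 z2 : z1 = star z2 -> z1 \in S -> z1 = z2.
Proof. by move->; rewrite /star; case: eqP => // _ yS'; move: yS; rewrite yS'. Qed.

(* Walks ending in [x] are continued along the edge [(x, y)], the others are
   joined at their common endpoint in [S]. *)
Lemma linked_glue : linked D A B #|x |: S|.
Proof.
have sD : D :\ (x, y) \subset D := subsetDl _ _.
pose W z := if z == x then P z ++ Q y else P z ++ behead (Q z).
have memW z c : c \in W z -> c \in P z \/ c \in Q (star z).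
  rewrite /W /star; case: eqP => _; rewrite mem_cat => /orP[]; auto.
  by move/mem_behead; auto.
exists (x |: S), W; split => // [z|z z' zX z'X zz'].
  rewrite /W; case: eqP => [-> xX|zx zX].
    apply: walk_glue_edge Dxy (walk_subset sD (hP xX).1) _.
    exact: walk_subset sD (hQ (setU11 _ _)).1.
  have zS : z \in y |: S by have := star_in zX; rewrite /star (introF eqP zx).
  by apply: walk_glue (walk_subset sD (hP zX).1) (walk_subset sD (hQ zS).1).
rewrite disjoint_has; apply/hasPn => c /memW cz; apply/negP => /memW cz'.
case: cz cz' => [cPz|cQz] [cPz'|cQz'].
- by move: (dP zX z'X zz'); rewrite disjoint_has => /hasPn/(_ c cPz); rewrite cPz'.
- have [e1 e2] := glue_meet zX (star_in z'X) cPz cQz'.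
  by rewrite (star_id_S e1) ?eqxx in zz'.
- have [e1 e2] := glue_meet z'X (star_in zX) cPz' cQz.
  by rewrite (star_id_S e1) ?eqxx in zz'.
- have nstar : star z != star z' by apply: contra zz' => /eqP/star_inj ->.
  move: (dQ (star_in zX) (star_in z'X) nstar); rewrite disjoint_has.
  by move=> /hasPn/(_ c cQz); rewrite cQz'.
Qed.

End Glue.

Lemma linked_edgeless A B n :
  (forall X, separates set0 A B X -> n <= #|X|) -> linked set0 A B n.
Proof.
move=> hsep; exists (A :&: B), (fun i => [:: i]); split.
- apply: hsep => [[|a [|b q]]] //=; first by rewrite inE orbF.
  by rewrite /edge inE andbF.
- by move=> i; rewrite inE /= => /andP[-> ->].
- by move=> i j _ _ ij; rewrite disjoint_has /= inE orbF.
Qed.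

(* By induction on the number of edges: if deleting the edge
   [(x, y)] creates an [A]-[B] separator [S] with fewer than [n] vertices, then
   [x |: S] and [y |: S] are minimum separators, and Menger's theorem below
   and above them provides the walks for [linked_glue]. *)
Theorem menger D A B n :
  (forall X, separates D A B X -> n <= #|X|) -> linked D A B n.
Proof.
move: {2}#|D| (leqnn #|D|) => m; elim: m D A B n => [|m IH] D A B n cD hsep.
  by move: cD hsep; rewrite leqn0 cards_eq0 => /eqP ->; exact: linked_edgeless.
case: (set_0Vmem D) => [D0|[[x y] xyD]].
  by move: hsep; rewrite D0; exact: linked_edgeless.
have cD' : #|D :\ (x, y)| <= m by move: cD; rewrite (cardsD1 (x, y) D) xyD.
case: (classic (forall X, separates (D :\ (x, y)) A B X -> n <= #|X|)) => [hc|].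
  have [I [f [nI hw hd]]] := IH _ A B n cD' hc.
  by exists I, f; split => // i iI; apply: walk_subset (subsetDl _ _) (hw i iI).
move=> /not_all_ex_not[S nS]; have [sepS /negP] := imply_to_and _ _ nS.
rewrite -ltnNge => cS.
have sepX := separates_setD1_edge_l sepS; have sepY := separates_setD1_edge_r sepS.
have nX := hsep _ sepX; have nY := hsep _ sepY.
have xS : x \notin S by apply: contraTN nX => xS; rewrite cardsU1 xS -ltnNge.
have yS : y \notin S by apply: contraTN nY => yS; rewrite cardsU1 yS -ltnNge.
have cX : #|x |: S| <= n by rewrite cardsU1 xS.
have cY : #|y |: S| <= n by rewrite cardsU1 yS.
have [P [hP dP]] := linked_last cX
  (IH _ A _ n cD' (fun Z sepZ => hsep Z (separates_prefix (setU11 x S) sepX sepZ))).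
have [Q [hQ dQ]] := linked_first cY
  (IH _ _ B n cD' (fun Z sepZ => hsep Z (separates_suffix (setU11 y S) sepY sepZ))).
have -> : n = #|x |: S| by apply/eqP; rewrite eqn_leq nX cX.
exact: linked_glue xyD yS sepS hP dP hQ dQ.
Qed.

End Menger.

Lemma asboolP (P : Prop) : reflect P (asbool P).
Proof. by rewrite /asbool; case: excluded_middle_informative => h; constructor. Qed.

Section BigMin.
Variables (I : eqType) (r : seq I) (P : pred I) (F : I -> nat) (N : nat).

Lemma bigmin_leq j : j \in r -> P j -> \big[minn/N]_(i <- r | P i) F i <= F j.
Proof.
elim: r => // i s IH; rewrite inE big_cons => /predU1P[-> ->|js Pj]; first exact: geq_minl.
by case: (P i); [apply: leq_trans (geq_minr _ _) _ |]; exact: IH.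
Qed.

Lemma leq_bigmin m : m <= N -> (forall i, P i -> m <= F i) ->
  m <= \big[minn/N]_(i <- r | P i) F i.
Proof. by move=> mN mF; apply: (big_ind (leq m)) => // a b; rewrite leq_min => -> ->. Qed.

Lemma bigmin_attained : \big[minn/N]_(i <- r | P i) F i < N ->
  exists2 i, P i & \big[minn/N]_(i <- r | P i) F i = F i.
Proof.
apply: (big_ind (fun x => x < N -> exists2 i, P i & x = F i)) => [|a b ha hb|i Pi _].
- by rewrite ltnn.
- by rewrite /minn; case: (ltnP a b) => _; [exact: ha | exact: hb].
- by exists i.
Qed.
End BigMin.

Lemma path_connect_last (T : finType) (R : rel T) a q z :
  path R a q -> z \in a :: q -> connect R z (last a q).
Proof.
move=> + zq; case/splitPl: zq => q1 q2 <-; rewrite cat_path last_cat => /andP[_ pq2].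
by apply/connectP; exists q2.
Qed.

Lemma all_behead_belast (T : eqType) (P : pred T) x s :
  all P s -> all P (behead (belast x s)).
Proof.
case: s => //= y s /andP[Py Ps]; apply/allP => z /mem_belast.
by rewrite inE => /predU1P[->|/(allP Ps)].
Qed.

Lemma uniq_pairwise (A : eqType) (R : rel A) (s : seq A) :
  uniq s -> {in s &, forall x y, x != y -> R x y} -> pairwise R s.
Proof.
elim: s => //= x s IH /andP[xs us] hR; rewrite IH ?andbT.
- apply/allP => y ys; apply: hR; rewrite ?inE ?eqxx ?ys ?orbT //.
  by apply: contraNneq xs => ->.
- by [].
- by move=> a b a1 b1; apply: hR; rewrite inE ?a1 ?b1 orbT.
Qed.

Lemma sum_le_cover (T : finType) (P Z : pred T) (Q : T -> pred T) (w : T -> nat) :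
  (forall v, P v -> exists2 z, Z z & Q z v) ->
  \sum_(v | P v) w v <= \sum_(z | Z z) \sum_(v | Q z v) w v.
Proof.
move=> cover; rewrite (exchange_big_dep predT) //=.
apply: (@leq_trans (\sum_(v | P v) \sum_(z | Z z && Q z v) w v)).
  apply: leq_sum => v Pv; have [z Zz Qzv] := cover v Pv.
  by rewrite (bigD1 z) /= ?Zz ?Qzv ?leq_addr.
by rewrite [leqRHS](bigID P) leq_addr.
Qed.

Section Reversal.
Variables (T : eqType) (R : rel T).
Implicit Types (x : T) (s : seq T).

Lemma last_rev_belast x s : last (last x s) (rev (belast x s)) = x.
Proof. by case/lastP: s => //= s y; rewrite last_rcons belast_rcons rev_cons last_rcons. Qed.

Lemma interior_rev x s :
  behead (belast (last x s) (rev (belast x s))) = rev (behead (belast x s)).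
Proof.
by case/lastP: s => //= s y; rewrite last_rcons belast_rcons rev_cons belast_rcons.
Qed.

Lemma path_rev_sym x s : symmetric R -> path R x s -> path R (last x s) (rev (belast x s)).
Proof. by move=> R_sym; rewrite rev_path; apply: sub_path => a b; rewrite R_sym. Qed.

End Reversal.

(** * Breadth-first layers below [u] *)

Section Layers.
Variables (T : finType) (e : rel T) (rk : T -> nat) (r : nat) (u : T).
Hypotheses (e_sym : symmetric e) (rk_inj : injective rk).

(* [low_walk x q]: [u :: q] is a walk from [u] to [x] whose interior lies below
   [u]; [layer x] is the length of a shortest one, or [r.+1] if it exceeds [r]. *)
Definition low_walk x q :=
  [&& path e u q, last u q == x & all (fun y => rk y < rk u) (behead (belast u q))].

Definition layer x : nat :=
  \big[minn/r.+1]_(i < r.+1 | asbool (exists q, size q = i /\ low_walk x q)) i.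

Lemma layer_le x q : low_walk x q -> size q <= r -> layer x <= size q.
Proof.
move=> wq sq; have sq1 : size q < r.+1 by [].
apply: (@bigmin_leq _ _ _ (fun i : 'I_r.+1 => nat_of_ord i) _ (Ordinal sq1)).
  exact: mem_index_enum.
by apply/asboolP; exists q.
Qed.

Lemma layer_witness x : layer x <= r -> exists2 q, size q = layer x & low_walk x q.
Proof.
move=> lx; have [i /asboolP[q [sq wq]] li] := bigmin_attained (lx : layer x < r.+1).
by exists q; rewrite // /layer li.
Qed.

Lemma layer_root : layer u = 0.
Proof. by apply/eqP; rewrite -leqn0 (@layer_le u [::]) //= /low_walk /= eqxx. Qed.

Lemma layer_eq0 x : layer x = 0 -> x = u.
Proof.
move=> lx; have [[|y q] //] := layer_witness (leq_trans (eq_leq lx) (leq0n r)).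
  by move=> _ /and3P[_ /eqP].
by rewrite lx.
Qed.

Lemma low_walk_cat y q1 q2 : low_walk y q1 -> rk y < rk u -> path e y q2 ->
  all (fun z => rk z < rk u) (behead (belast y q2)) -> low_walk (last y q2) (q1 ++ q2).
Proof.
case/and3P => p1 /eqP l1 a1 ry p2 a2.
rewrite /low_walk cat_path p1 l1 p2 last_cat l1 eqxx /= belast_cat l1.
case: q1 p1 l1 a1 => [|c q1] /= p1 l1 a1; first by rewrite -l1 ltnn in ry.
by rewrite all_cat a1 /=; case: q2 p2 a2 => //= d q2 _ ->; rewrite ry.
Qed.

Lemma layer_extend c q : layer c <= r -> rk c <= rk u -> path e c q ->
  all (fun z => rk z < rk u) (behead (belast c q)) -> layer c + size q <= r ->
  layer (last c q) <= layer c + size q.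
Proof.
move=> lc cu pq aq lcq; suff [q' wq' sq'] : exists2 q', low_walk (last c q) q' &
    size q' = layer c + size q by rewrite -sq' layer_le // sq'.
move: cu; rewrite leq_eqVlt => /predU1P[/rk_inj cu|cu].
  by subst c; exists q; rewrite ?layer_root // /low_walk pq eqxx aq.
have [qc sqc wqc] := layer_witness lc.
by exists (qc ++ q); rewrite ?low_walk_cat // size_cat sqc.
Qed.

(* The arcs of a breadth-first search from [u] that may only leave [u] and the
   vertices below [u]. *)
Definition step a b :=
  [&& e a b, rk a <= rk u, layer b <= r & layer b == (layer a).+1].

Lemma step_layer a b : step a b -> layer b = (layer a).+1.
Proof. by case/and4P => _ _ _ /eqP. Qed.

Lemma layer_gt0 z : z != u -> 0 < layer z.
Proof. by rewrite lt0n; apply: contra => /eqP/layer_eq0 ->. Qed.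

Lemma step_pred z : z != u -> layer z <= r -> exists y, step y z.
Proof.
move=> zu lz; have [q sq /and3P[pq /eqP lq aq]] := layer_witness lz.
case/lastP: q sq pq lq aq => [|q z'] sq; first by move=> _ /= lq; rewrite lq eqxx in zu.
rewrite size_rcons in sq; rewrite rcons_path last_rcons belast_rcons.
move=> /andP[pq eyz] zE aq; subst z'; set y := last u q; exists y.
have ry : rk y <= rk u.
  by have := mem_last u q; rewrite -/y inE => /predU1P[->//|/(allP aq)/ltnW].
have ly : layer y <= size q.
  by apply: layer_le; [rewrite /low_walk pq eqxx all_behead_belast | lia].
have lzy : layer z <= layer y + 1.
  by apply: (@layer_extend y [:: z]); rewrite //= ?eyz //; lia.
by rewrite /step eyz ry lz /=; apply/eqP; lia.
Qed.

Lemma connect_step_root z : layer z <= r -> connect step u z.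
Proof.
move: {2}(layer z) (erefl (layer z)) => n; elim: n z => [|n IH] z lz lzr.
  by rewrite (layer_eq0 lz) connect0.
have zu : z != u by apply: contra_eqN lz => /eqP ->; rewrite layer_root.
have [y syz] := step_pred zu lzr.
apply: connect_trans (IH y _ _) (connect1 syz); move: (step_layer syz); lia.
Qed.

Lemma step_path_layer a p : path step a p -> layer (last a p) = layer a + size p.
Proof.
elim: p a => [|b p IH] a /=; first by rewrite addn0.
by case/andP => /step_layer lb /IH ->; rewrite lb addSnnS.
Qed.

Lemma step_path_above a p : path step a p -> all (fun w => layer a < layer w) p.
Proof.
move=> pp; have lp : path (fun x y => layer x < layer y) a p.
  by apply: sub_path pp => x y /step_layer ->.
by apply: order_path_min lp => y x z; exact: ltn_trans.
Qed.

Lemma step_path_bounded a p : path step a p -> all (fun w => layer w <= r) p.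
Proof. by elim: p a => //= b p IH a /andP[/and4P[_ _ -> _] /IH]. Qed.

Lemma step_path_uniq a p : path step a p -> uniq (a :: p).
Proof.
move=> pp; apply: (@map_uniq _ _ layer); apply: (sorted_uniq ltn_trans ltnn).
by rewrite /= path_map; apply: sub_path pp => x y /step_layer ly; rewrite /relpre /= ly.
Qed.

Lemma step_path_edge a p : path step a p -> path e a p.
Proof. by apply: sub_path => x y /and4P[]. Qed.

Lemma connect_step_split c v : connect step c v -> c != v ->
  exists a q, [/\ step c a, path step a q & last a q = v].
Proof.
case/connectP => [[|a q]] /=; first by move=> _ ->; rewrite eqxx.
by case/andP => sca pq -> _; exists a, q.
Qed.

Lemma qual_low_walk l v p : qual e rk l u v p ->
  [/\ low_walk v p, size p <= l, rk u < rk v & uniq (u :: p)].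
Proof. by case/and4P => pp lp up /and4P[sp _ uv ap]; rewrite /low_walk pp lp ap. Qed.

Lemma low_walk_qual v q : low_walk v q -> rk u < rk v ->
  exists p, qual e rk (size q) u v p.
Proof.
case/and3P => pq /eqP lq aq uv; have vu : v != u by apply: contra_ltnN uv => /eqP ->.
have [p [pp up sp lp]] : exists p, [/\ path e u p, uniq (u :: p),
    {subset p <= q} & last u p = v].
  by rewrite -lq; case/shortenP: pq => p pp up sp; exists p.
exists p.
rewrite /qual pp lp eqxx up vu uv (uniq_leq_size (proj2 (andP up)) sp) /=.
case/lastP: p lp pp up sp => [/= vu'|p v']; first by rewrite vu' eqxx in vu.
rewrite last_rcons belast_rcons /= => vE _; subst v'.
case/andP=> _; rewrite rcons_uniq => /andP[vp _] sp; apply/allP => x xp.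
have xv : x != v by apply: contraNneq vp => <-.
have := sp x; rewrite mem_rcons inE xp orbT => /(_ isT).
case/lastP: q pq lq aq {sp} => [_ /= uv'|q y _]; first by rewrite uv' eqxx in vu.
rewrite last_rcons belast_rcons /= => -> /allP aq.
by rewrite mem_rcons inE (negbTE xv) => /aq.
Qed.

Lemma reach_layer v : v \in reach e rk r u ->
  [/\ rk u < rk v, layer v <= r & dv e rk u v = layer v].
Proof.
rewrite inE => /asboolP[p0 /qual_low_walk[w0 s0 uv un]].
have lv0 := layer_le w0 s0; have lv : layer v <= r := leq_trans lv0 s0.
have sp0 : size (u :: p0) <= #|T| by rewrite -(card_uniqP un) max_card.
have layer_ub i : v \in reach e rk i u -> layer v <= i.
  rewrite inE => /asboolP[p /qual_low_walk[w sp _ _]].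
  by case: (leqP (size p) r) => [/(layer_le w) lp|]; lia.
split => //; apply/eqP; rewrite eqn_leq; apply/andP; split; last first.
  apply: leq_bigmin => [|i]; last exact: layer_ub.
  by move: sp0 => /=; lia.
have lvT : layer v < #|T|.+1 by move: sp0 => /=; lia.
apply: (@bigmin_leq _ _ _ (fun i : 'I_#|T|.+1 => nat_of_ord i) _ (Ordinal lvT)).
  exact: mem_index_enum.
have [q sq wq] := layer_witness lv; have [p qp] := low_walk_qual wq uv.
by rewrite inE; apply/asboolP; exists p; rewrite /= -sq.
Qed.

Lemma qual_interior_low l c w q : rk c <= rk u -> qual e rk l c w q ->
  all (fun z => rk z < rk u) (behead (belast c q)).
Proof.
move=> cu /and4P[_ _ _ /and4P[_ _ _ aq]].
by apply: sub_all aq => z /= zc; apply: leq_trans zc cu.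
Qed.

Lemma layer_qual l c w q : layer c <= r -> rk c <= rk u -> qual e rk l c w q ->
  layer c + size q <= r -> layer w <= layer c + size q.
Proof.
move=> lc cu wq; have /and3P[pq /eqP <- _] := wq.
exact: layer_extend lc cu pq (qual_interior_low cu wq).
Qed.

Lemma layer_qual_rev l c w q : layer w <= r -> rk w <= rk u -> rk c <= rk u ->
  qual e rk l c w q -> layer w + size q <= r -> layer c <= layer w + size q.
Proof.
move=> lw wu cu wq; have /and3P[pq /eqP lq _] := wq; subst w.
have := @layer_extend _ (rev (belast c q)) lw wu.
rewrite last_rev_belast size_rev size_belast.
apply; first exact: path_rev_sym.
by rewrite interior_rev all_rev; exact: qual_interior_low cu wq.
Qed.

(* Following [step] arcs out of [c] until the first vertex above [c] gives a
   shortest qualifying path: a shorter one would put its end in a lower layer. *)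
Lemma forward_squal c a q : layer c <= r -> rk c <= rk u -> step c a -> path step a q ->
  rk c < rk (last a q) -> ~~ has (fun z => rk c < rk z) (belast a q) ->
  squal e rk r c (last a q) (a :: q).
Proof.
move=> lc cu sca pq cw hq; have pc : path step c (a :: q) by rewrite /= sca.
have lw := step_path_layer pc; have un := step_path_uniq pc.
have lwr : layer (last a q) <= r := allP (step_path_bounded pc) _ (mem_last a q).
split; last first.
  case=> q' wq'; have /and4P[_ _ _ /and4P[sq' _ _ _]] := wq'.
  rewrite /= in lw sq'; suff : layer (last a q) <= layer c + size q' by lia.
  by apply: layer_qual lc cu wq' _; lia.
rewrite /qual (step_path_edge pc) un cw /= eqxx; rewrite /= in lw.
have -> : size q < r by lia.
rewrite -(inj_eq rk_inj) neq_ltn cw orbT /=; apply/allP => z zq.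
move/hasPn/(_ z zq): hq; rewrite -leqNgt leq_eqVlt => /predU1P[/rk_inj zc|//].
by move: un; rewrite -zc cons_uniq (mem_belast zq).
Qed.

Lemma step_path_back c : rk c < rk u -> layer c <= r ->
  exists w q, [/\ rk c < rk w, path step w q, last w q = c &
                  all (fun z => rk z <= rk c) q].
Proof.
move=> cu lc; have /connectP[p pp lp] := connect_step_root lc.
have [|w [q [cw pq lq _ hq]]] := @path_suffix_hit _ _ (fun z => rk c < rk z) _ _ pp.
  by rewrite /= cu.
by exists w, q; split => //; [rewrite lq | apply/allP => z zq; rewrite leqNgt (hasPn hq)].
Qed.

(* Going back along [step] arcs from [c] below [u] to the first vertex above [c]
   gives a shortest qualifying path: a shorter one would put [c] in a lower layer. *)
Lemma backward_squal c : rk c < rk u -> layer c <= r ->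
  exists p, squal e rk r c (last c p) p /\ all (fun w => layer w < layer c) p.
Proof.
move=> cu lc; have [w [q [cw pq lq hq]]] := step_path_back cu lc; subst c.
have un := step_path_uniq pq; have lw := step_path_layer pq.
have [q0 wu] : 0 < size q /\ rk w <= rk u.
  by move: cw pq; case: (q) => [|b q'] /=; [rewrite ltnn | move=> _ /andP[/and4P[_ -> _ _] _]].
have unr : uniq (last w q :: rev (belast w q)) by rewrite -rev_rcons -lastI rev_uniq.
exists (rev (belast w q)); rewrite last_rev_belast; split; last first.
  have : path (fun x y => layer y < layer x) (last w q) (rev (belast w q)).
    by rewrite rev_path; apply: sub_path pq => x y /step_layer ->.
  by move/order_path_min; apply => y x z h1 h2; exact: ltn_trans h2 h1.
split; last first.
  case=> q'' wq''; have /and4P[_ _ _ /and4P[sq'' _ _ _]] := wq''.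
  rewrite size_rev size_belast in sq''.
  suff : layer (last w q) <= layer w + size q'' by lia.
  by apply: (layer_qual_rev _ wu (ltnW cu) wq''); lia.
rewrite /qual path_rev_sym ?step_path_edge ?last_rev_belast ?eqxx ?unr //=.
rewrite size_rev size_belast -(inj_eq rk_inj) neq_ltn cw orbT /=.
rewrite (leq_trans _ lc); last by rewrite lw leq_addl.
rewrite interior_rev all_rev; apply/allP => z zq.
have zq' : z \in q by case: (q) zq => //= ? ?; exact: mem_belast.
have := allP hq z zq'; rewrite leq_eqVlt => /predU1P[/rk_inj zl|//].
by move: un; rewrite lastI rcons_uniq -zl (mem_behead zq).
Qed.

Lemma disj_family_le_est c ps : (forall p, p \in ps -> squal e rk r c (last c p) p) ->
  disj_family ps -> size ps <= est e rk r c.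
Proof.
move=> sq dps; have head_in p : p \in ps -> head c p \in p.
  case/sq => /and4P[_ _ _ /and4P[_ pc _ _]] _.
  by case: p pc => [|a p] pc; [rewrite eqxx in pc | exact: mem_head].
have un : uniq (map (head c) ps).
  elim: ps sq dps head_in => //= p ps IH sq /andP[dp dps] hi.
  have sub q : q \in ps -> q \in p :: ps by rewrite inE => ->; rewrite orbT.
  rewrite IH => [|q /sub|//|q /sub]; [rewrite andbT | exact: sq | exact: hi].
  apply/mapP => -[q qps hq]; move/hasPn: (allP dp q qps) => /(_ _ (hi p (mem_head p ps))).
  by rewrite hq hi ?sub.
have sT : size ps < #|T|.+1 by rewrite ltnS -(size_map (head c)) -(card_uniqP un) max_card.
rewrite /est; apply: (@leq_bigmax_cond _ _ (fun m : 'I_#|T|.+1 => nat_of_ord m) (Ordinal sT)).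
by apply/asboolP; exists ps.
Qed.

Definition step_arcs : {set T * T} := [set ab | step ab.1 ab.2].
Definition out c : {set T} := [set b | step c b].
Definition above c : {set T} := [set b | rk c < rk b].

Lemma edge_step_arcs : edge step_arcs =2 step.
Proof. by move=> a b; rewrite /edge inE. Qed.

Lemma walk_squal c p : layer c <= r -> rk c <= rk u ->
  walk step_arcs (out c) (above c) p ->
  exists2 p', squal e rk r c (last c p') p' &
              all (fun w => layer c < layer w) p' /\ {subset p' <= p}.
Proof.
move=> lc cu; case: p => //= a q /and3P[]; rewrite !inE (eq_path edge_step_arcs).
move=> sca pq cw; have hc : has (fun z => rk c < rk z) (a :: q).
  by apply/hasP; exists (last a q); rewrite ?mem_last.
have [q' [pq' cw' sq' hq']] := path_prefix_hit pq hc.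
exists (a :: q'); first exact: forward_squal.
split; first by apply: step_path_above; rewrite /= sca.
by move=> z; rewrite !inE => /predU1P[->|/sq' ->]; rewrite ?eqxx ?orbT.
Qed.

(* The linked walks give disjoint shortest qualifying paths from [c] above
   [layer c]; below [u] the path back towards [u] adds one more, below [layer c]. *)
Lemma linked_est c n : layer c <= r -> rk c <= rk u ->
  linked step_arcs (out c) (above c) n -> n + (rk c < rk u) <= est e rk r c.
Proof.
move=> lc cu [I [f [nI fw fd]]].
have [g hg] : exists g : T -> seq T, forall i, i \in I ->
    [/\ squal e rk r c (last c (g i)) (g i), all (fun w => layer c < layer w) (g i)
      & {subset g i <= f i}].
  apply: (@fin_all_exists T (fun=> seq T) (fun i p => i \in I ->
    [/\ squal e rk r c (last c p) p, all (fun w => layer c < layer w) p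
      & {subset p <= f i}])) => i.
  case: (boolP (i \in I)) => iI; last by exists [::].
  by have [p sq [ap sp]] := walk_squal lc cu (fw i iI); exists p.
have sq p : p \in map g (enum I) -> squal e rk r c (last c p) p.
  by case/mapP => i; rewrite mem_enum => /hg[] ? _ _ ->.
have dps : disj_family (map g (enum I)).
  rewrite /disj_family pairwise_map; apply: uniq_pairwise (enum_uniq _) _ => i j.
  rewrite !mem_enum => iI jI ij; have [_ _ si] := hg i iI; have [_ _ sj] := hg j jI.
  suff : [disjoint g i & g j] by rewrite disjoint_has.
  by apply: disjointW (fd i j iI jI ij); apply/subsetP.
have nps : n <= size (map g (enum I)) by rewrite size_map -cardE.
case: (ltnP (rk c) (rk u)) => [cu'|_]; last first.
  by rewrite addn0 (leq_trans nps) ?disj_family_le_est.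
have [pb [sqb lb]] := backward_squal cu' lc.
rewrite addn1 (leq_trans _ (@disj_family_le_est c (pb :: map g (enum I)) _ _)) //.
  by move=> p; rewrite inE => /predU1P[->|/sq].
rewrite /disj_family pairwise_cons -/(disj_family _) dps andbT.
apply/allP => _ /mapP[i + ->]; rewrite mem_enum => /hg[_ ag _].
apply/hasPn => z zb; apply/negP => zg.
by move: (allP lb z zb) (allP ag z zg); lia.
Qed.

Variable k : nat.
Hypothesis est_le : forall x, est e rk r x <= k.

Lemma small_separator c n : layer c <= r -> rk c <= rk u -> k < n + (rk c < rk u) ->
  exists2 X, separates step_arcs (out c) (above c) X & #|X| < n.
Proof.
move=> lc cu kn.
case: (classic (forall X, separates step_arcs (out c) (above c) X -> n <= #|X|)).
  by move/menger/(linked_est lc cu)/leq_trans/(_ (est_le c)); rewrite leqNgt kn.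
move/not_all_ex_not=> [X nX]; have [sX /negP] := imply_to_and _ _ nX.
by rewrite -ltnNge; exists X.
Qed.

Lemma separator_cover c X v : separates step_arcs (out c) (above c) X ->
  rk c < rk v -> connect step c v ->
  exists2 z, z \in X & [&& layer c < layer z, layer z <= r & connect step z v].
Proof.
move=> sX cv cc; have vc : c != v by apply: contra_ltnN cv => /eqP ->.
have [a [q [sca pq lq]]] := connect_step_split cc vc; subst v.
have /hasP[z zq zX] : has [in X] (a :: q).
  by apply: sX; rewrite /= !inE sca cv (eq_path edge_step_arcs) pq.
have pc : path step c (a :: q) by rewrite /= sca.
exists z; rewrite // (allP (step_path_above pc)) ?(allP (step_path_bounded pc)) //=.
exact: path_connect_last pq zq.
Qed.

Definition mass c := \sum_(v | (rk u < rk v) && connect step c v) (k - 1) ^ (r - layer v).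

Lemma mass_le_separator c X : rk c <= rk u ->
  separates step_arcs (out c) (above c) X ->
  mass c <= \sum_(z in X | layer c < layer z <= r) mass z.
Proof.
move=> cu sX; apply: sum_le_cover => v /andP[uv cv].
have [z zX /and3P[cz zr zv]] := separator_cover sX (leq_ltn_trans cu uv) cv.
by exists z; rewrite ?zX ?cz ?zr ?uv.
Qed.

Lemma mass_above c : rk u < rk c -> mass c = (k - 1) ^ (r - layer c).
Proof.
move=> uc; rewrite /mass (eq_bigl (pred1 c)) ?big_pred1_eq // => v /=.
case: (eqVneq v c) => [->|vc]; first by rewrite uc connect0.
apply/negbTE; rewrite negb_and; apply/orP; right; apply/negP => cv.
have cv' : c != v by rewrite eq_sym.
have [a [q [/and4P[_ cu _ _] _ _]]] := connect_step_split cv cv'.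
by rewrite leqNgt uc in cu.
Qed.

Lemma sum_le_card (X : {set T}) (P : pred T) C : \sum_(z in X | P z) C <= #|X| * C.
Proof.
rewrite -sum_nat_const; apply: (sub_le_big leqnn (fun m n => leq_addr n m)).
by move=> z /andP[].
Qed.

(* Below [u], Menger's theorem splits the mass at a separator of at most [k - 1]
   vertices of higher layers. *)
Lemma mass_below c : rk c < rk u -> layer c <= r ->
  (forall z, layer c < layer z -> layer z <= r -> mass z <= (k - 1) ^ (r - layer z)) ->
  mass c <= (k - 1) ^ (r - layer c).
Proof.
move=> cu lc IH; have kk : k < k + (rk c < rk u) by rewrite cu addn1.
have [X sX cX] := small_separator lc (ltnW cu) kk.
apply: leq_trans (mass_le_separator (ltnW cu) sX) _.
case: (pickP [pred z | (z \in X) && (layer c < layer z <= r)]) => [z0|none]; last first.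
  by rewrite big_pred0.
case/andP=> z0X /andP[cz0 z0r]; have X0 : 0 < #|X| by apply/card_gt0P; exists z0.
have -> : r - layer c = (r - layer c).-1.+1 by lia.
apply: (@leq_trans (\sum_(z in X | layer c < layer z <= r) (k - 1) ^ (r - layer c).-1)).
  apply: leq_sum => z /andP[_ /andP[cz zr]]; apply: leq_trans (IH z cz zr) _.
  by apply: leq_pexp2l; lia.
by apply: leq_trans (sum_le_card _ _ _) _; rewrite expnS leq_mul2r; apply/orP; right; lia.
Qed.

Lemma mass_le c : c != u -> layer c <= r -> mass c <= (k - 1) ^ (r - layer c).
Proof.
move: {2}(r - layer c) (leqnn (r - layer c)) => m; elim: m c => [|m IH] c lm cu lc.
all: case: (ltngtP (rk u) (rk c)) => [uc|cu'|/rk_inj ec]; last by rewrite ec eqxx in cu.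
all: try by rewrite mass_above.
all: apply: mass_below => // z cz zr.
  lia.
by apply: IH => //; [lia | apply: contraTneq cz => ->; rewrite layer_root].
Qed.

Lemma connect_step_bounded c v : connect step c v -> layer c <= r -> layer v <= r.
Proof.
move=> /connectP[[|a q] pq ->] lc //.
exact: (allP (step_path_bounded pq) _ (mem_last a q)).
Qed.

(* For [k <= 1] the bound degenerates: a vertex above [u] in layer [r >= 2] has a
   predecessor below [u] whose mass [0 ^ 1] would have to contain [0 ^ 0]. *)
Lemma top_layer_empty v : k <= 1 -> 1 < r -> rk u < rk v -> layer v != r.
Proof.
move=> k1 r2 uv; apply/eqP => lv; have vu : v != u by apply: contra_ltnN uv => /eqP ->.
have [y syv] := step_pred vu (eq_leq lv); have ly := step_layer syv.
have yu : y != u by apply/eqP => yu; rewrite yu layer_root in ly; lia.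
have ly' : layer y <= r by lia.
have := mass_le yu ly'; rewrite /mass (bigD1 v) /=; last by rewrite uv connect1.
have -> : k - 1 = 0 by lia.
by rewrite lv subnn expn0 (_ : r - layer y = 1) //; lia.
Qed.

Lemma mass_le_top c : c != u -> layer c <= r -> mass c <= (k - 1) ^ (r - 1).
Proof.
move=> cu lc; have lc0 := layer_gt0 cu.
case: (ltnP 1 k) => [k2|k1].
  by apply: leq_trans (mass_le cu lc) _; apply: leq_pexp2l; lia.
case: (leqP r 1) => [r1|r2].
  by apply: leq_trans (mass_le cu lc) _; rewrite (_ : r - layer c = r - 1) //; lia.
have k0 : k - 1 = 0 by lia.
rewrite /mass k0 exp0n ?subn_gt0 // leqn0 sum_nat_eq0.
apply/forallP => v; apply/implyP => /andP[uv cv].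
have lv := connect_step_bounded cv lc; have := top_layer_empty k1 r2 uv.
by move=> /eqP lvr; rewrite exp0n //; lia.
Qed.

Lemma reach_sum_le :
  \sum_(v in reach e rk r u) (k - 1) ^ (r - dv e rk u v) <= k * (k - 1) ^ (r - 1).
Proof.
rewrite (eq_bigr (fun v => (k - 1) ^ (r - layer v))); last first.
  by move=> v /reach_layer[_ _ ->].
apply: (@leq_trans (mass u)).
  apply: (sub_le_big leqnn (fun m n => leq_addr n m)) => v /reach_layer[uv lv _].
  by rewrite uv connect_step_root.
have kk : k < k.+1 + (rk u < rk u) by rewrite ltnn addn0.
have lu : layer u <= r by rewrite layer_root.
have [X sX cX] := small_separator lu (leqnn _) kk.
apply: leq_trans (mass_le_separator (leqnn _) sX) _.
apply: (@leq_trans (\sum_(z in X | layer u < layer z <= r) (k - 1) ^ (r - 1))).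
  apply: leq_sum => z /andP[_ /andP[uz zr]]; apply: mass_le_top zr.
  by apply: contraTneq uz => ->; rewrite ltnn.
by apply: leq_trans (sum_le_card _ _ _) _; rewrite leq_mul2r -ltnS cX orbT.
Qed.

End Layers.

Theorem lemma4p5 (T : finType) (e : rel T) (r k : nat) (rk : T -> nat) :
  symmetric e -> irreflexive e -> 1 <= r ->
  k = adm e r ->
  injective rk ->
  (forall u : T, est e rk r u <= k) ->
  forall u : T,
    \sum_(v in reach e rk r u) (k - 1) ^ (r - dv e rk u v)
      <= k * (k - 1) ^ (r - 1).
Proof.
(* Only [est <= k] matters: the bound holds for any such [k], not just [adm e r]. *)
move=> e_sym _ _ _ rk_inj est_le u.
exact: reach_sum_le.
Qed.
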